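(* The function $\widetilde{M_f}$ defined in the context satisfies $\lim_{r\to+\infty}\widetilde{M_f}(r)=-\infty$.
   Context: For $r>\frac23$ let $u_b(r)\in(\frac65,\frac43)$ be the unique $u\in(\frac65,\frac43)$ with $2-u+2q(1-u)=0$ at $q=1+\sqrt{\frac{r+u-2}{r+0.1}}$. Set $q_{f,\pm}(r)=1\pm\sqrt{\frac{r}{r+0.1}}$, $q_{b,\pm}(r)=1\pm\sqrt{\frac{r+u_b(r)-2}{r+0.1}}$, $S(r)=(q_{f,+}-2q_{f,-})+(q_{b,+}-2q_{b,-})$ and $D_0(r)=\frac{2(2-u_b(r))^2}{(r+0.1)S(r)^2}$ (equivalently, $D_0(r)>0$ together with some $\mu_0(r)$ solves $2+\mu=\frac12\sqrt{2D(r+0.1)}(q_{f,+}-2q_{f,-})$ and $u_b+\mu=-\frac12\sqrt{2D(r+0.1)}(q_{b,+}-2q_{b,-})$). Let $\phi(\chi)=(1+e^{-\frac{\sqrt2}{2}\chi})^{-1}$, $\kappa_f(r)=\frac12-\frac{q_{f,-}(r)}{q_{f,+}(r)}$ and $$\widetilde{M_f}(r)=-q_{f,+}(r)\sqrt{\frac{r+0.1}{D_0(r)}}\int_{-\infty}^{\infty}e^{-\sqrt2\kappa_f(r)\chi}\phi'(\chi)^2d\chi+\int_{-\infty}^{\infty}e^{-\sqrt2\kappa_f(r)\chi}\phi'(\chi)\phi(\chi)d\chi .$$ *)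

From Stdlib Require Import Reals ClassicalEpsilon.
From Coquelicot Require Import Coquelicot.
Open Scope R_scope.

Definition c01 : R := 1 / 10.

Definition q_of (r u : R) : R := 1 + sqrt ((r + u - 2) / (r + c01)).

Definition ub_prop (r u : R) : Prop :=
  6/5 < u < 4/3 /\ 2 - u + 2 * q_of r u * (1 - u) = 0.

(* u_b(r): the (unique, for r > 2/3) u in (6/5,4/3) with the property;
   chosen by Hilbert's epsilon (value irrelevant where no such u exists). *)
Definition u_b (r : R) : R := epsilon (inhabits 0) (ub_prop r).

Definition q_fp (r : R) : R := 1 + sqrt (r / (r + c01)).
Definition q_fm (r : R) : R := 1 - sqrt (r / (r + c01)).
Definition q_bp (r : R) : R := 1 + sqrt ((r + u_b r - 2) / (r + c01)).
Definition q_bm (r : R) : R := 1 - sqrt ((r + u_b r - 2) / (r + c01)).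

Definition S_ (r : R) : R := (q_fp r - 2 * q_fm r) + (q_bp r - 2 * q_bm r).

Definition D0 (r : R) : R :=
  2 * (2 - u_b r) ^ 2 / ((r + c01) * (S_ r) ^ 2).

Definition phi (chi : R) : R := / (1 + exp (- (sqrt 2 / 2) * chi)).

Definition kappa_f (r : R) : R := 1/2 - q_fm r / q_fp r.

Definition int_R (f : R -> R) : R :=
  RInt_gen f (Rbar_locally m_infty) (Rbar_locally p_infty).

Definition Mf_tilde (r : R) : R :=
  - q_fp r * sqrt ((r + c01) / D0 r)
      * int_R (fun chi => exp (- sqrt 2 * kappa_f r * chi) * (Derive phi chi) ^ 2)
  + int_R (fun chi => exp (- sqrt 2 * kappa_f r * chi) * Derive phi chi * phi chi).

(* For r >= 2 the exponent kappa_f lies in [0, 1/2], so the weight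
   exp (-sqrt 2 kappa_f chi) is at most 1 + exp (-chi / sqrt 2), and this factor
   times phi or phi' is at most 1: both integrands are nonnegative and dominated by
   phi', whose total integral is 1.  Hence both improper integrals exist, the second
   is at most 1 and the first is at least its integral over [0, 1], a positive
   constant c independent of r.  Since u_b stays in (6/5, 4/3), S >= 1 and
   D_0 <= 2 / (r + 0.1), so the prefactor q_f+ sqrt ((r + 0.1) / D_0) is at least
   r / 2 and Mf_tilde r <= 1 - c r / 2. *)

From Stdlib Require Import Reals Lra ClassicalEpsilon.
From Coquelicot Require Import Coquelicot.
Open Scope R_scope.

Section NonnegImproperIntegral.

Variable f : R -> R.
Hypothesis f_ex : forall a b, ex_RInt f a b.
Hypothesis f_ge0 : forall x, 0 <= f x.

Lemma RInt_le_RInt_wider a a' b' b :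
  a <= a' -> a' <= b' -> b' <= b -> RInt f a' b' <= RInt f a b.
Proof.
  intros Haa' Hab' Hb'b.
  rewrite <- (RInt_Chasles f a a' b), <- (RInt_Chasles f a' b' b) by auto.
  assert (0 <= RInt f a a') by (apply RInt_ge_0; auto).
  assert (0 <= RInt f b' b) by (apply RInt_ge_0; auto).
  unfold plus; simpl; lra.
Qed.

Definition compact_integrals (y : R) : Prop :=
  exists a b, a <= b /\ y = RInt f a b.

Lemma is_RInt_gen_lub L :
  is_lub compact_integrals L ->
  is_RInt_gen f (Rbar_locally m_infty) (Rbar_locally p_infty) L.
Proof.
  intros [L_ub L_least] P [eps Heps].
  assert (Hclose : exists a' b', a' <= b' /\ L - eps < RInt f a' b').
  { apply NNPP; intro Hfar.
    assert (L <= L - eps).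
    { apply L_least; intros y [a [b [Hab ->]]].
      apply Rnot_lt_le; intro Hlt; apply Hfar; now exists a, b. }
    destruct eps; simpl in *; lra. }
  destruct Hclose as [a' [b' [Hab' Hlt]]].
  exists (fun a => a < a') (fun b => b' < b); [now exists a' | now exists b' |].
  intros a b Ha Hb; exists (RInt f a b); split; [exact (RInt_correct f a b (f_ex a b))|].
  apply Heps; change (Rabs (RInt f a b - L) < eps).
  assert (RInt f a' b' <= RInt f a b) by (apply RInt_le_RInt_wider; lra).
  assert (RInt f a b <= L) by (apply L_ub; exists a, b; split; [lra | auto]).
  apply Rabs_def1; destruct eps; simpl in *; lra.
Qed.

Variable M : R.
Hypothesis RInt_le_M : forall a b, a <= b -> RInt f a b <= M.

Lemma int_R_is_lub : is_lub compact_integrals (int_R f).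
Proof.
  destruct (completeness compact_integrals) as [L HL].
  - exists M; intros y [a [b [Hab ->]]]; auto.
  - exists (RInt f 0 0), 0, 0; split; [lra | reflexivity].
  - unfold int_R; now rewrite (is_RInt_gen_unique _ _ (is_RInt_gen_lub L HL)).
Qed.

Lemma int_R_le : int_R f <= M.
Proof. apply int_R_is_lub; intros y [a [b [Hab ->]]]; auto. Qed.

Lemma RInt_le_int_R a b : a <= b -> RInt f a b <= int_R f.
Proof. intros Hab; apply int_R_is_lub; now exists a, b. Qed.

End NonnegImproperIntegral.

Lemma sqrt2_bounds : 1 < sqrt 2 < 2.
Proof.
  assert (H4 : sqrt 4 = 2) by (rewrite <- (sqrt_square 2) by lra; f_equal; lra).
  rewrite <- sqrt_1, <- H4; split; apply sqrt_lt_1; lra.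
Qed.

Lemma exp_le_exp x y : x <= y -> exp x <= exp y.
Proof. intros [Hlt | ->]; [left; now apply exp_increasing | lra]. Qed.

Definition ephi (x : R) : R := exp (- (sqrt 2 / 2) * x).

Definition dphi (x : R) : R := sqrt 2 / 2 * ephi x / (1 + ephi x) ^ 2.

Lemma ephi_pos x : 0 < ephi x.
Proof. apply exp_pos. Qed.

Lemma phi_ephi x : (1 + ephi x) * phi x = 1.
Proof. unfold phi; fold (ephi x); pose proof (ephi_pos x); field; lra. Qed.

Lemma phi_bounds x : 0 < phi x < 1.
Proof.
  pose proof (phi_ephi x); pose proof (ephi_pos x).
  split; nra.
Qed.

Lemma phi_is_derive x : is_derive phi x (dphi x).
Proof.
  unfold phi, dphi, ephi; pose proof (exp_pos (- (sqrt 2 / 2) * x)).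
  auto_derive; [lra | field; lra].
Qed.

Lemma Derive_phi x : Derive phi x = dphi x.
Proof. apply is_derive_unique, phi_is_derive. Qed.

Lemma continuous_dphi x : continuous dphi x.
Proof.
  apply (ex_derive_continuous (K := R_AbsRing) (V := R_NormedModule)).
  unfold dphi, ephi; pose proof (exp_pos (- (sqrt 2 / 2) * x)).
  auto_derive; apply Rmult_integral_contrapositive; split; lra.
Qed.

Lemma dphi_ge0 x : 0 <= dphi x.
Proof.
  unfold dphi; pose proof (ephi_pos x); pose proof sqrt2_bounds.
  apply Rle_mult_inv_pos; [nra | apply pow_lt; lra].
Qed.

Lemma ephi_mul_dphi_le x : (1 + ephi x) * dphi x <= 1.
Proof.
  pose proof (ephi_pos x); pose proof sqrt2_bounds.
  unfold dphi; replace ((1 + ephi x) * (sqrt 2 / 2 * ephi x / (1 + ephi x) ^ 2))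
    with (sqrt 2 / 2 * (ephi x / (1 + ephi x))) by (field; lra).
  assert (0 <= ephi x / (1 + ephi x) <= 1).
  { split; [apply Rle_mult_inv_pos; lra |].
    apply Rmult_le_reg_r with (1 + ephi x); [lra |].
    field_simplify; lra. }
  nra.
Qed.

Lemma ex_RInt_dphi a b : ex_RInt dphi a b.
Proof.
  apply (ex_RInt_continuous (V := R_CompleteNormedModule)); intros.
  apply continuous_dphi.
Qed.

Lemma RInt_dphi_le1 a b : RInt dphi a b <= 1.
Proof.
  rewrite (is_RInt_unique dphi a b (phi b - phi a)).
  - pose proof (phi_bounds a); pose proof (phi_bounds b); lra.
  - apply (is_RInt_derive phi dphi); intros; [apply phi_is_derive | apply continuous_dphi].
Qed.

Lemma dphi_ge_on_unit x : 0 <= x <= 1 -> exp (-1) / 8 <= dphi x.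
Proof.
  intros Hx; pose proof sqrt2_bounds; pose proof (exp_pos (-1)).
  assert (exp (-1) <= ephi x) by (apply exp_le_exp; nra).
  assert (ephi x <= 1) by (rewrite <- exp_0; apply exp_le_exp; nra).
  unfold dphi; apply Rmult_le_reg_r with ((1 + ephi x) ^ 2); [apply pow_lt; lra |].
  replace (sqrt 2 / 2 * ephi x / (1 + ephi x) ^ 2 * (1 + ephi x) ^ 2)
    with (sqrt 2 / 2 * ephi x) by (field; lra).
  assert ((1 + ephi x) ^ 2 <= 4) by nra.
  nra.
Qed.

Lemma exp_mul_le_1_plus_exp t y : 0 <= t <= 1 -> exp (t * y) <= 1 + exp y.
Proof.
  intros Ht; pose proof (exp_pos y); pose proof (exp_pos (t * y)).
  destruct (Rle_dec y 0).
  - assert (exp (t * y) <= exp 0) by (apply exp_le_exp; nra).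
    rewrite exp_0 in *; lra.
  - assert (exp (t * y) <= exp y) by (apply exp_le_exp; nra).
    lra.
Qed.

Definition weight (k x : R) : R := exp (- sqrt 2 * k * x).

Lemma weight_pos k x : 0 < weight k x.
Proof. apply exp_pos. Qed.

Lemma weight_le k x : 0 <= k <= 1/2 -> weight k x <= 1 + ephi x.
Proof.
  intros Hk; unfold weight, ephi.
  replace (- sqrt 2 * k * x) with (2 * k * (- (sqrt 2 / 2) * x)) by field.
  apply exp_mul_le_1_plus_exp; lra.
Qed.

Lemma weight_ge_on_unit k x : 0 <= k <= 1/2 -> 0 <= x <= 1 -> exp (-1) <= weight k x.
Proof.
  intros Hk Hx; pose proof sqrt2_bounds.
  assert (0 <= sqrt 2 * k <= 1) by nra.
  apply exp_le_exp; nra.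
Qed.

Definition dphi2_integrand (k x : R) : R := weight k x * Derive phi x ^ 2.

Definition dphi_phi_integrand (k x : R) : R := weight k x * Derive phi x * phi x.

Lemma ex_RInt_dphi2_integrand k a b : ex_RInt (dphi2_integrand k) a b.
Proof.
  apply (ex_RInt_ext (fun x => weight k x * dphi x ^ 2)).
  { intros x _; unfold dphi2_integrand; now rewrite Derive_phi. }
  apply (ex_RInt_continuous (V := R_CompleteNormedModule)); intros x _.
  apply (ex_derive_continuous (K := R_AbsRing) (V := R_NormedModule)).
  unfold weight, dphi, ephi; pose proof (exp_pos (- (sqrt 2 / 2) * x)).
  auto_derive; apply Rmult_integral_contrapositive; split; lra.
Qed.

Lemma ex_RInt_dphi_phi_integrand k a b : ex_RInt (dphi_phi_integrand k) a b.
Proof.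
  apply (ex_RInt_ext (fun x => weight k x * dphi x * phi x)).
  { intros x _; unfold dphi_phi_integrand; now rewrite Derive_phi. }
  apply (ex_RInt_continuous (V := R_CompleteNormedModule)); intros x _.
  apply (ex_derive_continuous (K := R_AbsRing) (V := R_NormedModule)).
  unfold weight, dphi, ephi, phi; pose proof (exp_pos (- (sqrt 2 / 2) * x)).
  auto_derive; split; [apply Rmult_integral_contrapositive; split |]; lra.
Qed.

Lemma dphi2_integrand_bounds k x :
  0 <= k <= 1/2 -> 0 <= dphi2_integrand k x <= dphi x.
Proof.
  intros Hk; unfold dphi2_integrand; rewrite Derive_phi.
  pose proof (weight_le k x Hk); pose proof (weight_pos k x).
  pose proof (ephi_mul_dphi_le x); pose proof (dphi_ge0 x); pose proof (ephi_pos x).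
  assert (weight k x * dphi x <= 1) by nra.
  split; nra.
Qed.

Lemma dphi_phi_integrand_bounds k x :
  0 <= k <= 1/2 -> 0 <= dphi_phi_integrand k x <= dphi x.
Proof.
  intros Hk; unfold dphi_phi_integrand; rewrite Derive_phi.
  pose proof (weight_le k x Hk); pose proof (weight_pos k x).
  pose proof (phi_bounds x); pose proof (dphi_ge0 x).
  assert (Hwphi : weight k x * phi x <= 1).
  { rewrite <- (phi_ephi x); apply Rmult_le_compat_r; lra. }
  replace (weight k x * dphi x * phi x) with (dphi x * (weight k x * phi x)) by ring.
  split; [apply Rmult_le_pos; nra |].
  rewrite <- (Rmult_1_r (dphi x)) at 2; apply Rmult_le_compat_l; lra.
Qed.

Lemma RInt_le1_of_le_dphi g a b :
  (forall a b, ex_RInt g a b) -> (forall x, g x <= dphi x) -> a <= b -> RInt g a b <= 1.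
Proof.
  intros g_ex g_le Hab; eapply Rle_trans; [| apply (RInt_dphi_le1 a b)].
  apply RInt_le; auto using ex_RInt_dphi.
Qed.

Lemma int_R_dphi_phi_integrand_le1 k :
  0 <= k <= 1/2 -> int_R (dphi_phi_integrand k) <= 1.
Proof.
  intros Hk; apply int_R_le.
  - apply ex_RInt_dphi_phi_integrand.
  - intros; apply dphi_phi_integrand_bounds, Hk.
  - intros; apply RInt_le1_of_le_dphi; auto using ex_RInt_dphi_phi_integrand.
    intros; apply dphi_phi_integrand_bounds, Hk.
Qed.

Definition dphi2_integrand_lb : R := exp (-1) * (exp (-1) / 8) ^ 2.

Lemma dphi2_integrand_lb_pos : 0 < dphi2_integrand_lb.
Proof. pose proof (exp_pos (-1)); apply Rmult_lt_0_compat, pow_lt; lra. Qed.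

Lemma RInt_dphi2_integrand_ge_on_unit k :
  0 <= k <= 1/2 -> dphi2_integrand_lb <= RInt (dphi2_integrand k) 0 1.
Proof.
  intros Hk; replace dphi2_integrand_lb with (RInt (fun _ => dphi2_integrand_lb) 0 1)
    by (rewrite RInt_const; unfold scal; simpl; unfold mult; simpl; ring).
  apply RInt_le; [lra | apply ex_RInt_const | apply ex_RInt_dphi2_integrand |].
  intros x Hx; unfold dphi2_integrand, dphi2_integrand_lb; rewrite Derive_phi.
  pose proof (weight_ge_on_unit k x Hk ltac:(lra)).
  pose proof (dphi_ge_on_unit x ltac:(lra)); pose proof (exp_pos (-1)).
  apply Rmult_le_compat; try lra; [apply pow2_ge_0 | apply pow_incr; lra].
Qed.

Lemma int_R_dphi2_integrand_ge k :
  0 <= k <= 1/2 -> dphi2_integrand_lb <= int_R (dphi2_integrand k).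
Proof.
  intros Hk; eapply Rle_trans; [now apply RInt_dphi2_integrand_ge_on_unit |].
  apply (RInt_le_int_R _ (ex_RInt_dphi2_integrand k)) with (M := 1); [| | lra].
  - intros; apply dphi2_integrand_bounds, Hk.
  - intros; apply RInt_le1_of_le_dphi; auto using ex_RInt_dphi2_integrand.
    intros; apply dphi2_integrand_bounds, Hk.
Qed.

Lemma continuous_ub_equation r :
  forall u, continuous (fun u => 2 - u + 2 * q_of r u * (1 - u)) u.
Proof.
  intros u; unfold q_of.
  apply (continuous_plus (V := R_NormedModule)).
  - apply (continuous_minus (V := R_NormedModule));
      [apply continuous_const | apply continuous_id].
  - apply (continuous_mult (K := R_AbsRing));
      [apply (continuous_mult (K := R_AbsRing)); [apply continuous_const |] |].
    + apply (continuous_plus (V := R_NormedModule)); [apply continuous_const |].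
      apply continuous_sqrt_comp, (continuous_mult (K := R_AbsRing)); [| apply continuous_const].
      apply (continuous_minus (V := R_NormedModule)); [| apply continuous_const].
      apply (continuous_plus (V := R_NormedModule)); [apply continuous_const | apply continuous_id].
    + apply (continuous_minus (V := R_NormedModule)); [apply continuous_const | apply continuous_id].
Qed.

Lemma sqrt_lt_one x : x < 1 -> sqrt x < 1.
Proof.
  intros Hx; destruct (Rle_dec x 0) as [Hneg | Hpos].
  - rewrite sqrt_neg_0; lra.
  - rewrite <- sqrt_1; apply sqrt_lt_1_alt; lra.
Qed.

Lemma sqrt_le_one x : x <= 1 -> sqrt x <= 1.
Proof. intros Hx; rewrite <- sqrt_1; now apply sqrt_le_1_alt. Qed.

Lemma half_le_sqrt x : 1/4 <= x -> 1/2 <= sqrt x.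
Proof. intros Hx; rewrite <- (sqrt_pow2 (1/2)) by lra; apply sqrt_le_1_alt; lra. Qed.

(* The left side is [4/5 - 2 q / 5 > 0] at [u = 6/5] since [q < 2] (for [r <= 4/5] the
   radicand is negative and [sqrt] returns [0]), and [2/3 (1 - q) < 0] at [u = 4/3]
   since [r > 2/3] makes [q > 1]. *)
Lemma ub_prop_exists r : 2/3 < r -> exists u, ub_prop r u.
Proof.
  intros Hr; set (h := fun u => 2 - u + 2 * q_of r u * (1 - u)).
  assert (Hlo : 0 < h (6/5)).
  { unfold h, q_of, c01.
    assert (sqrt ((r + 6/5 - 2) / (r + 1/10)) < 1).
    { apply sqrt_lt_one, Rmult_lt_reg_r with (r + 1/10); [lra | field_simplify; lra]. }
    lra. }
  assert (Hhi : h (4/3) < 0).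
  { unfold h, q_of, c01.
    assert (0 < sqrt ((r + 4/3 - 2) / (r + 1/10))).
    { apply sqrt_lt_R0, Rdiv_lt_0_compat; lra. }
    lra. }
  destruct (IVT_gen_consistent h (6/5) (4/3) 0 (continuous_ub_equation r)) as [u [Hu Hhu]].
  { rewrite Rmin_right, Rmax_left; lra. }
  rewrite Rmin_left, Rmax_right in Hu by lra.
  exists u; split; [| exact Hhu].
  assert (u <> 6/5) by (intros ->; lra).
  assert (u <> 4/3) by (intros ->; lra).
  lra.
Qed.

Lemma u_b_bounds r : 2/3 < r -> 6/5 < u_b r < 4/3.
Proof. intros Hr; apply (epsilon_spec (inhabits 0) (ub_prop r) (ub_prop_exists r Hr)). Qed.

Lemma kappa_f_bounds r : 1 <= r -> 0 <= kappa_f r <= 1/2.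
Proof.
  intros Hr; unfold kappa_f, q_fm, q_fp, c01.
  set (s := sqrt (r / (r + 1/10))).
  assert (1/2 <= s).
  { apply half_le_sqrt, Rmult_le_reg_r with (r + 1/10); [lra | field_simplify; lra]. }
  assert (s <= 1).
  { apply sqrt_le_one, Rmult_le_reg_r with (r + 1/10); [lra | field_simplify; lra]. }
  assert (0 <= (1 - s) / (1 + s)) by (apply Rdiv_le_0_compat; lra).
  assert ((1 - s) / (1 + s) <= 1/2).
  { apply Rmult_le_reg_r with (1 + s); [lra | field_simplify; lra]. }
  lra.
Qed.

Lemma S_ge1 r : 2 <= r -> 1 <= S_ r.
Proof.
  intros Hr; pose proof (u_b_bounds r ltac:(lra)).
  unfold S_, q_fp, q_fm, q_bp, q_bm, c01.
  assert (1/2 <= sqrt (r / (r + 1/10))).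
  { apply half_le_sqrt, Rmult_le_reg_r with (r + 1/10); [lra | field_simplify; lra]. }
  assert (1/2 <= sqrt ((r + u_b r - 2) / (r + 1/10))).
  { apply half_le_sqrt, Rmult_le_reg_r with (r + 1/10); [lra | field_simplify; lra]. }
  lra.
Qed.

Lemma D0_bounds r : 2 <= r -> 0 < D0 r <= 2 / (r + c01).
Proof.
  intros Hr; pose proof (u_b_bounds r ltac:(lra)); pose proof (S_ge1 r Hr).
  unfold D0, c01 in *.
  assert (1 <= S_ r ^ 2) by nra.
  assert (0 < (2 - u_b r) ^ 2 <= 1) by nra.
  split.
  - apply Rdiv_lt_0_compat; nra.
  - apply Rmult_le_reg_r with ((r + 1/10) * S_ r ^ 2); [nra |].
    field_simplify; nra.
Qed.

Lemma prefactor_ge r : 2 <= r -> r / 2 <= q_fp r * sqrt ((r + c01) / D0 r).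
Proof.
  intros Hr; pose proof (D0_bounds r Hr) as [HD0 HD0le]; unfold c01 in *.
  assert (Hq : 1 <= q_fp r) by (unfold q_fp; pose proof (sqrt_pos (r / (r + c01))); lra).
  assert (Hratio : (r / 2) ^ 2 <= (r + 1/10) / D0 r).
  { apply Rmult_le_reg_r with (D0 r); [lra |].
    replace ((r + 1/10) / D0 r * D0 r) with (r + 1/10) by (field; lra).
    apply Rle_trans with ((r / 2) ^ 2 * (2 / (r + 1/10))); [apply Rmult_le_compat_l; nra |].
    apply Rmult_le_reg_r with (r + 1/10); [lra | field_simplify; nra]. }
  apply sqrt_le_1_alt in Hratio; rewrite sqrt_pow2 in Hratio by lra.
  nra.
Qed.

Lemma Mf_tilde_le r :
  2 <= r -> Mf_tilde r <= 1 - dphi2_integrand_lb / 2 * r.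
Proof.
  intros Hr; pose proof (kappa_f_bounds r ltac:(lra)) as Hk.
  change (Mf_tilde r) with
    (- q_fp r * sqrt ((r + c01) / D0 r) * int_R (dphi2_integrand (kappa_f r))
     + int_R (dphi_phi_integrand (kappa_f r))).
  pose proof (prefactor_ge r Hr); pose proof (int_R_dphi2_integrand_ge _ Hk).
  pose proof (int_R_dphi_phi_integrand_le1 _ Hk); pose proof dphi2_integrand_lb_pos.
  set (A := q_fp r * sqrt ((r + c01) / D0 r)) in *.
  set (I := int_R (dphi2_integrand (kappa_f r))) in *.
  assert (r / 2 * dphi2_integrand_lb <= A * I) by (apply Rmult_le_compat; lra).
  unfold A in *; lra.
Qed.

Lemma is_lim_affine_m_infty a b : 0 < a -> is_lim (fun r => b - a * r) p_infty m_infty.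
Proof.
  intros Ha; eapply is_lim_minus; [apply is_lim_const | apply is_lim_scal_l, is_lim_id |].
  simpl; destruct (Rle_dec 0 a) as [Ha' |]; [| lra].
  destruct (Rle_lt_or_eq_dec 0 a Ha'); [reflexivity | lra].
Qed.

Theorem theorem4 : is_lim Mf_tilde p_infty m_infty.
Proof.
  apply is_lim_le_m_loc with (fun r => 1 - dphi2_integrand_lb / 2 * r).
  - exists 2; intros r Hr; apply Mf_tilde_le; lra.
  - apply is_lim_affine_m_infty; pose proof dphi2_integrand_lb_pos; lra.
Qed.
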